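(* The algebra $\mathcal{A}$ equals the algebra of (noncommutative) polynomials in $U$, $U^{-1}$, $P_{\ge0}$ and $P_0$.
   Context: Let $\{E_k\}_{k\in\mathbb{Z}}$ be the canonical basis of $\ell^2(\mathbb{Z})$, $UE_k=E_{k+1}$, $\mathbb{K}E_k=kE_k$, and $a(\mathbb{K})E_k=a(k)E_k$ for $a:\mathbb{Z}\to\mathbb{C}$. A function $a:\mathbb{Z}\to\mathbb{C}$ is eventually constant if there is $k_0$ such that $a$ is constant on $\{k\ge k_0\}$ and constant on $\{k\le-k_0\}$ (the two constants may differ). $\mathcal{A}$ is the set of finite sums $\sum_nU^na_n(\mathbb{K})$ with each $a_n$ eventually constant. $P_0$ is the orthogonal projection onto $\mathrm{span}\{E_0\}$ and $P_{\ge0}$ the orthogonal projection onto $\overline{\mathrm{span}}\{E_k:k\ge0\}$. *)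

From HB Require Import structures.
From mathcomp Require Import all_boot all_order all_algebra.
From mathcomp Require Import complex.
From mathcomp Require Import reals.
Set Implicit Arguments. Unset Strict Implicit. Unset Printing Implicit Defensive.
Import Order.TTheory GRing.Theory Num.Theory.
Local Open Scope ring_scope.

Section Ops.
Variable R : realType.
Local Notation C := (R[i])%C.

(* Operators are represented by their action on all sequences Z -> C; on
   l^2(Z) each operator below acts by the same formula, and the operators in
   question are determined by their values on the basis vectors E_k. *)
Definition Op := (int -> C) -> (int -> C).

(* U^n for n : int, with U E_k = E_{k+1}, i.e. (U f)(k) = f(k-1). *)
Definition Upow (n : int) : Op := fun f k => f (k - n).
Definition Ushift : Op := Upow 1.
Definition Uinv : Op := Upow (-1).

Definition diagop (a : int -> C) : Op := fun f k => a k * f k.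

Definition P0 : Op := diagop (fun k => if k == 0 then 1 else 0).
Definition Pge0 : Op := diagop (fun k => if 0 <= k then 1 else 0).

Definition idop : Op := fun f => f.
Definition addop (S T : Op) : Op := fun f k => S f k + T f k.
Definition scaleop (c : C) (T : Op) : Op := fun f k => c * T f k.
Definition compop (S T : Op) : Op := fun f => S (T f).

Definition eventually_constant (a : int -> C) : Prop :=
  exists (k0 : int) (cplus cminus : C),
    forall k : int, (k0 <= k -> a k = cplus) /\ (k <= - k0 -> a k = cminus).

Definition in_A (T : Op) : Prop :=
  exists (ns : seq int) (a : int -> int -> C),
    (forall n, n \in ns -> eventually_constant (a n)) /\
    T = fun f k => \sum_(n <- ns) Upow n (diagop (a n) f) k.

Inductive in_poly_alg : Op -> Prop :=
| pa_id : in_poly_alg idop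
| pa_U : in_poly_alg Ushift
| pa_Uinv : in_poly_alg Uinv
| pa_Pge0 : in_poly_alg Pge0
| pa_P0 : in_poly_alg P0
| pa_add S T : in_poly_alg S -> in_poly_alg T -> in_poly_alg (addop S T)
| pa_scale c T : in_poly_alg T -> in_poly_alg (scaleop c T)
| pa_comp S T : in_poly_alg S -> in_poly_alg T -> in_poly_alg (compop S T).

End Ops.

From HB Require Import structures.
From mathcomp Require Import all_boot all_order all_algebra.
From mathcomp Require Import complex reals.
From mathcomp Require Import zify ring.
From mathcomp Require Import boolp.
Set Implicit Arguments. Unset Strict Implicit. Unset Printing Implicit Defensive.

(* An operator sum_n U^n a_n(K) lies in the polynomial algebra because an
   eventually constant symbol is a combination of 1, a step [K >= j] and
   finitely many point masses [K = j], and U^j conjugates P_{>=0} and P_0 into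
   these.  Conversely, sums of terms U^n a(K) contain the generators and are
   closed under products since a(K) U^m = U^m a(K + m), and eventually constant
   symbols are stable under shifts, sums and products. *)

Import Order.TTheory GRing.Theory Num.Theory.
Local Open Scope ring_scope.

Section ShiftDiagonal.
Variable R : realType.
Local Notation C := (R[i])%C.
Local Notation ecR := (@eventually_constant R).

Lemma op_ext (S T : Op R) : (forall f k, S f k = T f k) -> S = T.
Proof.
by move=> eqST; apply/funext => f; apply/funext => k; exact: eqST.
Qed.

Lemma eventually_constant_nat (a : int -> C) : ecR a ->
  exists (N : nat) (cp cm : C),
    forall k, (N%:Z <= k -> a k = cp) /\ (k <= - N%:Z -> a k = cm).
Proof.
case=> k0 [cp [cm ecA]]; exists `|k0|%N, cp, cm => k.
by split => Hk; [apply: (proj1 (ecA k)) | apply: (proj2 (ecA k))]; lia.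
Qed.

Lemma eventually_constant_eq (a b : int -> C) : ecR a -> a =1 b -> ecR b.
Proof.
case=> k0 [cp [cm ecA]] eqab; exists k0, cp, cm => k.
by rewrite -eqab; exact: ecA.
Qed.

Lemma eventually_constant_cst (c : C) : ecR (fun=> c).
Proof. by exists 0, c, c. Qed.

Lemma eventually_constant_map2 (op : C -> C -> C) (a b : int -> C) :
  ecR a -> ecR b -> ecR (fun k => op (a k) (b k)).
Proof.
move=> /eventually_constant_nat [N [cp [cm ecA]]].
move=> /eventually_constant_nat [M [dp [dm ecB]]].
exists (N + M)%:Z, (op cp dp), (op cm dm) => k; split => Hk.
  by rewrite (proj1 (ecA k)) ?(proj1 (ecB k)) //; lia.
by rewrite (proj2 (ecA k)) ?(proj2 (ecB k)) //; lia.
Qed.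

Lemma eventually_constant_shift (a : int -> C) (m : int) :
  ecR a -> ecR (fun k => a (k + m)).
Proof.
move=> /eventually_constant_nat [N [cp [cm ecA]]].
exists (N + `|m|)%:Z, cp, cm => k.
by split => Hk; [rewrite (proj1 (ecA _)) | rewrite (proj2 (ecA _))] => //; lia.
Qed.

Lemma eventually_constant_sum (I : Type) (r : seq I) (P : pred I)
    (F : I -> int -> C) :
  (forall i, ecR (F i)) -> ecR (fun k => \sum_(i <- r | P i) F i k).
Proof.
move=> ecF; elim: r => [|i r IHr].
  by apply: (eventually_constant_eq (eventually_constant_cst 0)) => k;
    rewrite big_nil.
apply: (eventually_constant_eq
  (eventually_constant_map2 (fun x y => if P i then x + y else y) (ecF i) IHr)).
by move=> k; rewrite big_cons.
Qed.

Lemma Upow0 : Upow 0 = @idop R.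
Proof. by apply: op_ext => f k; rewrite /Upow subr0. Qed.

(* Terms are indexed by an arbitrary finite type, so a shift may occur several
   times; this makes sums and products easy, and terms with equal shifts are
   only merged in [is_Udiag_sum_in_A]. *)
Definition Udiag_sum (I : finType) (n : I -> int) (a : I -> int -> C) : Op R :=
  fun f k => \sum_i Upow (n i) (diagop (a i) f) k.

Definition is_Udiag_sum (T : Op R) : Prop :=
  exists (I : finType) (n : I -> int) (a : I -> int -> C),
    (forall i, ecR (a i)) /\ T = Udiag_sum n a.

Lemma is_Udiag_sum_term (n : int) (a : int -> C) :
  ecR a -> is_Udiag_sum (compop (Upow n) (diagop a)).
Proof.
move=> ecA; exists 'I_1, (fun=> n), (fun=> a); split => //.
by apply: op_ext => f k; rewrite /Udiag_sum big_ord1.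
Qed.

Lemma is_Udiag_sum_Upow (n : int) : is_Udiag_sum (Upow n).
Proof.
have -> : Upow n = compop (Upow n) (diagop (fun=> 1)) :> Op R.
  by apply: op_ext => f k; rewrite /compop /diagop /Upow mul1r.
exact/is_Udiag_sum_term/eventually_constant_cst.
Qed.

Lemma is_Udiag_sum_diag (a : int -> C) : ecR a -> is_Udiag_sum (diagop a).
Proof.
by move=> /(is_Udiag_sum_term 0); rewrite Upow0.
Qed.

Lemma is_Udiag_sum_add (S T : Op R) :
  is_Udiag_sum S -> is_Udiag_sum T -> is_Udiag_sum (addop S T).
Proof.
move=> [I [n [a [ecA ->]]]] [J [m [b [ecB ->]]]].
exists (I + J)%type, (fun p => match p with inl i => n i | inr j => m j end),
  (fun p => match p with inl i => a i | inr j => b j end); split.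
  by case.
by apply: op_ext => f k; rewrite /Udiag_sum /addop big_sumType.
Qed.

Lemma is_Udiag_sum_scale (c : C) (T : Op R) :
  is_Udiag_sum T -> is_Udiag_sum (scaleop c T).
Proof.
move=> [I [n [a [ecA ->]]]]; exists I, n, (fun i k => c * a i k); split.
  by move=> i; apply/eventually_constant_map2/ecA/eventually_constant_cst.
apply: op_ext => f k; rewrite /Udiag_sum /scaleop mulr_sumr.
by apply: eq_bigr => i _; rewrite /Upow /diagop mulrA.
Qed.

Lemma is_Udiag_sum_comp (S T : Op R) :
  is_Udiag_sum S -> is_Udiag_sum T -> is_Udiag_sum (compop S T).
Proof.
move=> [I [n [a [ecA ->]]]] [J [m [b [ecB ->]]]].
exists (I * J)%type, (fun p => n p.1 + m p.2),
  (fun p k => a p.1 (k + m p.2) * b p.2 k); split.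
  by move=> p; apply/eventually_constant_map2/ecB/eventually_constant_shift.
apply: op_ext => f k; rewrite /Udiag_sum /compop.
rewrite -(pair_bigA _ (fun i j => Upow (n i + m j)
  (diagop (fun k => a i (k + m j) * b j k) f) k)).
apply: eq_bigr => i _; rewrite /Upow /diagop mulr_sumr.
apply: eq_bigr => j _ /=; rewrite mulrA.
have -> : k - (n i + m j) + m j = k - n i by ring.
by have -> : k - (n i + m j) = k - n i - m j by ring.
Qed.

Lemma in_poly_alg_is_Udiag_sum (T : Op R) : in_poly_alg T -> is_Udiag_sum T.
Proof.
elim=> {T}.
- by rewrite -Upow0; exact: is_Udiag_sum_Upow.
- exact: is_Udiag_sum_Upow.
- exact: is_Udiag_sum_Upow.
- apply: is_Udiag_sum_diag; exists 1, 1, 0 => k.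
  by split => Hk; [rewrite ifT | rewrite ifF] => //; lia.
- apply: is_Udiag_sum_diag; exists 1, 0, 0 => k.
  by split => Hk; rewrite ifF //; lia.
- by move=> S T _ ? _ ?; apply: is_Udiag_sum_add.
- by move=> c T _ ?; apply: is_Udiag_sum_scale.
- by move=> S T _ ? _ ?; apply: is_Udiag_sum_comp.
Qed.

Lemma is_Udiag_sum_in_A (T : Op R) : is_Udiag_sum T -> in_A T.
Proof.
move=> [I [n [a [ecA ->]]]].
exists (undup [seq n i | i <- enum I]), (fun m k => \sum_(i | n i == m) a i k).
split; first by move=> m _; exact: eventually_constant_sum.
apply: op_ext => f k; rewrite /Udiag_sum /Upow /diagop.
under [RHS]eq_bigr => m _ do rewrite mulr_suml.
rewrite (exchange_big_dep xpredT) //=; apply: eq_bigr => i _.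
rewrite -big_filter (@eq_filter _ _ (pred1 (n i))) => [|m]; last exact: eq_sym.
by rewrite filter_pred1_uniq ?undup_uniq ?mem_undup ?map_f ?mem_enum //
  big_seq1.
Qed.

Lemma Upow_add (m n : int) : compop (Upow m) (Upow n) = Upow (m + n) :> Op R.
Proof. by apply: op_ext => f k; rewrite /compop /Upow opprD addrA. Qed.

Lemma in_poly_alg_Upow (n : int) : in_poly_alg (Upow n : Op R).
Proof.
elim/int_rect: n => [|n IHn|n IHn].
- by rewrite Upow0; exact: pa_id.
- by rewrite intS -Upow_add; apply: pa_comp => //; exact: pa_U.
- by rewrite intS opprD -Upow_add; apply: pa_comp => //; exact: pa_Uinv.
Qed.

Lemma in_poly_alg_diag_shift (j : int) (b : int -> C) :
  in_poly_alg (diagop b) -> in_poly_alg (diagop (fun k => b (k - j))).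
Proof.
have -> : diagop (fun k => b (k - j)) =
    compop (Upow j) (compop (diagop b) (Upow (- j))).
  by apply: op_ext => f k; rewrite /compop /Upow /diagop opprK subrK.
by move=> pb; do ![apply: pa_comp | exact: in_poly_alg_Upow].
Qed.

Lemma in_poly_alg_diag_const_outside (d : nat) (lo : int) (a : int -> C)
    (cm cp : C) :
    (forall k, k < lo -> a k = cm) -> (forall k, lo + d%:Z <= k -> a k = cp) ->
  in_poly_alg (diagop a).
Proof.
elim: d lo a => [|d IHd] lo a aL aR.
  have -> : diagop a = addop (scaleop cm (@idop R))
      (scaleop (cp - cm) (diagop (fun k => (if 0 <= k - lo then 1 else 0)))).
    apply: op_ext => f k; rewrite /addop /scaleop /idop /diagop.
    case: (ltrP k lo) => klo.
      by rewrite aL // ifF ?mul0r ?mulr0 ?addr0 //; lia.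
    by rewrite aR ?addr0 // ifT ?mul1r; [ring | lia].
  apply: pa_add; first exact/pa_scale/pa_id.
  apply/pa_scale/(in_poly_alg_diag_shift lo
    (b := fun k => if 0 <= k then 1 else 0)).
  exact: pa_Pge0.
(* Moving the value at lo to cm costs one point mass and shrinks the gap. *)
pose a' k := if k == lo then cm else a k.
have -> : diagop a = addop (diagop a')
    (scaleop (a lo - cm) (diagop (fun k => (if k - lo == 0 then 1 else 0)))).
  apply: op_ext => f k; rewrite /addop /scaleop /diagop /a'.
  case: (eqVneq k lo) => [->|klo]; first by rewrite subrr eqxx; ring.
  by rewrite ifF ?mul0r ?mulr0 ?addr0 //; lia.
apply: pa_add; last first.
  apply/pa_scale/(in_poly_alg_diag_shift lo
    (b := fun k => if k == 0 then 1 else 0)).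
  exact: pa_P0.
apply: (IHd (lo + 1) a') => k Hk; rewrite /a'.
  by case: eqVneq => // klo; apply: aL; lia.
by rewrite ifF; [apply: aR | ]; lia.
Qed.

Lemma in_poly_alg_diag (a : int -> C) : ecR a -> in_poly_alg (diagop a).
Proof.
move=> /eventually_constant_nat [N [cp [cm ecA]]].
apply: (in_poly_alg_diag_const_outside (d := N.*2) (lo := - N%:Z) (cm := cm)
  (cp := cp)).
  by move=> k Hk; apply: (proj2 (ecA k)); lia.
by move=> k Hk; apply: (proj1 (ecA k)); lia.
Qed.

Lemma in_A_in_poly_alg (T : Op R) : in_A T -> in_poly_alg T.
Proof.
move=> [ns [a [ecA ->]]]; elim: ns ecA => [|n ns IHns] ecA.
  have -> : (fun f k => \sum_(n <- [::]) Upow n (diagop (a n) f) k) =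
      scaleop 0 (@idop R).
    by apply: op_ext => f k; rewrite big_nil /scaleop mul0r.
  exact/pa_scale/pa_id.
have -> : (fun f k => \sum_(m <- n :: ns) Upow m (diagop (a m) f) k) =
    addop (compop (Upow n) (diagop (a n)))
          (fun f k => \sum_(m <- ns) Upow m (diagop (a m) f) k).
  by apply: op_ext => f k; rewrite big_cons.
apply: pa_add; last by apply: IHns => m mns; apply: ecA; rewrite inE mns orbT.
apply: pa_comp; first exact: in_poly_alg_Upow.
by apply/in_poly_alg_diag/ecA; rewrite inE eqxx.
Qed.

End ShiftDiagonal.

Theorem mainTheorem4 (R : realType) (T : Op R) :
  in_A T <-> in_poly_alg T.
Proof.
split; first exact: in_A_in_poly_alg.
by move=> /in_poly_alg_is_Udiag_sum /is_Udiag_sum_in_A.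
Qed.
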